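(* Let $p:\{0,1\}^*\to[0,1]$ be a binary-coded probability distribution and consider the algorithm GenOpt described below, run on $p$ with fair random bits. For each $n\in\mathbb{N}$, the algorithm almost surely appends at least $n$ bits to $b$; the prefix $B_1\ldots B_n$ of $b$ has distribution $p_n$ (i.e. $\Pr(B_1\ldots B_n=s)=p(s)$ for every $s\in\{0,1\}^n$); and the algorithm, viewed as a generator producing $B_1\ldots B_n$, is entropy-optimal for $p_n$: the expected number of random bits drawn up to and including the moment the $n$-th bit is appended equals the minimum expected entropy cost over all random variate generators whose output distribution is $p_n$.
   Context: A binary-coded probability distribution is a map $p:\{0,1\}^*\to[0,1]$ with $p(\varepsilon)=1$ ($\varepsilon$ the empty string) and $p(b)=p(b0)+p(b1)$ for every finite binary string $b$. For $n\ge0$, $p_n$ denotes the discrete distribution on $\{0,1\}^n$ given by $s\mapsto p(s)$. Every real $z\in[0,1]$ has a unique concise binary expansion $z=(z_0.z_1z_2\ldots)_2=\sum_{i\ge0}z_i2^{-i}$ not ending in an infinite string of 1s; write $[z]_i:=z_i$. Algorithm GenOpt: it maintains a string $b$ (initially empty) and a counter $\ell$ (initially $0$) of random bits drawn, and repeats forever the following round, which appends one bit to $b$: if $[p(b0)]_\ell=1$ and $[p(b1)]_\ell=0$, append $0$; else if $[p(b0)]_\ell=0$ and $[p(b1)]_\ell=1$, append $1$; otherwise repeat: draw a fair random bit $x$ and set $\ell\leftarrow\ell+1$; if $x=0$ and $[p(b0)]_\ell=1$, append $0$ and end the round; if $x=1$ and $[p(b1)]_\ell=1$, append $1$ and end the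 round. A random variate generator for a distribution $q$ on $\{0,1\}^n$ is a partial map $Y:\{0,1\}^*\rightharpoonup\{0,1\}^n$ whose domain is prefix-free (if $u\in\mathrm{dom}(Y)$ then no proper extension of $u$ is in $\mathrm{dom}(Y)$) and exhaustive ($\sum_{u\in\mathrm{dom}(Y)}2^{-|u|}=1$), with $\sum_{u\in\mathrm{dom}(Y)}2^{-|u|}\mathbf{1}[Y(u)=s]=q(s)$ for all $s$; its expected entropy cost is $\sum_{u\in\mathrm{dom}(Y)}|u|\,2^{-|u|}$ (the expected number of fair input bits read). *)

From HB Require Import structures.
From mathcomp Require Import all_boot all_order all_algebra.
From mathcomp Require Import all_classical all_reals all_analysis.
Set Implicit Arguments. Unset Strict Implicit. Unset Printing Implicit Defensive.
Import Order.TTheory GRing.Theory Num.Theory.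
Local Open Scope classical_set_scope.
Local Open Scope ring_scope.

(* Finite binary strings are [seq bool]; the string b0 (resp. b1) is
   [rcons b false] (resp. [rcons b true]). *)

Definition binary_coded {R : realType} (p : seq bool -> R) : Prop :=
  [/\ p [::] = 1,
      (forall b, 0 <= p b <= 1) &
      (forall b, p b = p (rcons b false) + p (rcons b true))].

(* [z]_i : i-th digit of the concise binary expansion (z_0.z_1z_2...)_2 of
   z in [0,1]; it is the parity of floor (z * 2^i). *)
Definition digit {R : realType} (z : R) (i : nat) : bool :=
  odd `|Num.floor (z * 2 ^+ i)|%N.

Section GenOpt.
Variables (R : realType) (p : seq bool -> R).

(* State of GenOpt: (b, l, remaining unread input bits). *)
Definition state := (seq bool * nat * seq bool)%type.

Fixpoint draw_loop (b : seq bool) (l : nat) (inp : seq bool) : option state :=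
  match inp with
  | [::] => None
  | x :: inp' =>
      if ~~ x && digit (p (rcons b false)) l.+1 then
        Some (rcons b false, l.+1, inp')
      else if x && digit (p (rcons b true)) l.+1 then
        Some (rcons b true, l.+1, inp')
      else draw_loop b l.+1 inp'
  end.

Definition genopt_round (st : state) : option state :=
  let: (b, l, inp) := st in
  let d0 := digit (p (rcons b false)) l in
  let d1 := digit (p (rcons b true)) l in
  if d0 && ~~ d1 then Some (rcons b false, l, inp)
  else if ~~ d0 && d1 then Some (rcons b true, l, inp)
  else draw_loop b l inp.

Fixpoint genopt_run (n : nat) (u : seq bool) : option state :=
  match n with
  | 0 => Some ([::], 0, u)
  | n'.+1 => obind genopt_round (genopt_run n' u)
  end.

(* GenOpt viewed as a generator for the first n output bits: it is defined
   on u iff the n-th bit is appended exactly when the last bit of u has been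
   drawn (i.e. all of u is consumed), and outputs B_1...B_n. *)
Definition genopt_gen (n : nat) (u : seq bool) : option (seq bool) :=
  match genopt_run n u with
  | Some (b, _, [::]) => Some b
  | _ => None
  end.

End GenOpt.

(* Random variate generators: partial maps {0,1}^* -> {0,1}^n, encoded
   as functions to option (seq bool). *)
Definition gdom (Y : seq bool -> option (seq bool)) : set (seq bool) :=
  [set u | Y u <> None].

Definition prefix_free (D : set (seq bool)) : Prop :=
  forall u v, D u -> D (u ++ v) -> v = [::].

Definition weight {R : realType} (u : seq bool) : \bar R :=
  ((2 : R) ^- size u)%:E.

(* Y is a random variate generator for the distribution q on {0,1}^n
   (q is only evaluated on strings of length n). *)
Definition is_generator {R : realType} (n : nat) (q : seq bool -> R)
    (Y : seq bool -> option (seq bool)) : Prop :=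
  [/\ prefix_free (gdom Y),
      \esum_(u in gdom Y) (@weight R u) = 1%E,
      (forall u s, Y u = Some s -> size s = n) &
      (forall s, size s = n ->
         \esum_(u in [set u | Y u = Some s]) (@weight R u) = (q s)%:E)].

Definition entropy_cost {R : realType} (Y : seq bool -> option (seq bool))
    : \bar R :=
  \esum_(u in gdom Y) ((size u)%:R * (2 : R) ^- size u)%:E.

From HB Require Import structures.
From mathcomp Require Import all_boot all_order all_algebra.
From mathcomp Require Import all_classical all_reals all_analysis.
From mathcomp Require Import lra ring zify.
Import Order.TTheory GRing.Theory Num.Theory.
Local Open Scope classical_set_scope.
Local Open Scope ring_scope.
Set Implicit Arguments.
Unset Strict Implicit.

(* Let N(b, j) count the inputs u of length j on which GenOpt, after |b| rounds,
   has output b and has read exactly u.  The heart of the proof is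
   N(b, j) = [p(b)]_j.  By induction along b, N(b x, -) is the convolution of
   N(b, -) with the number of ways a single round started with counter l appends
   x after exactly k draws.  That number depends only on the digits of p(b0) and
   p(b1), and evaluating the convolution is the digit-by-digit addition
   p(b) = p(b0) + p(b1): the carry into digit m is the number of ways a round is
   still drawing at counter m.
   Hence GenOpt maps exactly [p(s)]_j inputs of each length j to s, with mass
   sum_j [p(s)]_j 2^-j = p(s) and cost sum_j j [p(s)]_j 2^-j.  Any generator for
   p_n maps c_j inputs of length j to s with sum_j c_j 2^-j = p(s); the partial
   sums of the binary expansion dominate those of c, and Abel summation turns
   this into sum_j j [p(s)]_j 2^-j <= sum_j j c_j 2^-j. *)

Fixpoint bitseqs (n : nat) : seq bitseq :=
  if n is n'.+1 then
    [seq false :: u | u <- bitseqs n'] ++ [seq true :: u | u <- bitseqs n']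
  else [:: [::]].

Lemma mem_bitseqs n u : (u \in bitseqs n) = (size u == n).
Proof.
elim: n u => [|n IH] [|x u] /=; rewrite ?mem_seq1 // mem_cat.
- by apply/orP => -[] /mapP [].
- have cons_inj (y : bool) : injective (cons y) by move=> ? ? [].
  rewrite eqSS -IH; case: x; rewrite (mem_map (cons_inj _)).
    by apply/orP/idP => [[/mapP [] //|//]|]; right.
  by apply/orP/idP => [[//|/mapP [] //]|]; left.
Qed.

Lemma bitseqs_uniq n : uniq (bitseqs n).
Proof.
elim: n => [|n IH] //=; rewrite cat_uniq !map_inj_uniq ?IH /=; try by move=> ? ? [].
by rewrite andbT; apply/hasPn => _ /mapP [u _ ->]; apply/mapP => -[].
Qed.

Lemma count_bitseqs_cat (A B : pred bitseq) m k :
  count (fun u => A (take m u) && B (drop m u)) (bitseqs (m + k)) =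
  (count A (bitseqs m) * count B (bitseqs k))%N.
Proof.
elim: m A => [|m IH] A /=.
  rewrite add0n; under eq_count do rewrite take0 drop0.
  by case: (A [::]); rewrite /= ?mul1n ?mul0n ?addn0 // count_pred0.
by rewrite !count_cat !count_map mulnDl -!IH.
Qed.

Lemma big_bitseqsS (V : nmodType) (F : bitseq -> V) n :
  \sum_(s <- bitseqs n.+1) F s = \sum_(s <- bitseqs n) (F (rcons s false) + F (rcons s true)).
Proof.
elim: n F => [|n IH] F; first by rewrite /= !big_cons !big_nil !addr0.
have -> : bitseqs n.+2 = [seq false :: u | u <- bitseqs n.+1] ++
  [seq true :: u | u <- bitseqs n.+1] by [].
rewrite big_cat !big_map (IH (fun u => F (false :: u))) (IH (fun u => F (true :: u))).
have -> : bitseqs n.+1 = [seq false :: u | u <- bitseqs n] ++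
  [seq true :: u | u <- bitseqs n] by [].
by rewrite big_cat !big_map.
Qed.

Lemma count_sum (T : Type) (a : pred T) (r : seq T) :
  count a r = (\sum_(x <- r) a x)%N.
Proof. by rewrite -sumn_count sumnE big_map. Qed.

Section Execution.
Variables (R : realType) (p : seq bool -> R).

Lemma draw_loop_cat b l inp w b' l' r :
  draw_loop p b l inp = Some (b', l', r) ->
  draw_loop p b l (inp ++ w) = Some (b', l', r ++ w).
Proof.
elim: inp l => [|x inp IH] l //=.
case: ifP => _; first by case=> <- <- <-.
by case: ifP => _; [case=> <- <- <- | apply: IH].
Qed.

Lemma draw_loop_split b l inp b' l' r :
  draw_loop p b l inp = Some (b', l', r) ->
  exists2 u, [/\ inp = u ++ r, l' = (l + size u)%N & draw_loop p b l u = Some (b', l', [::])]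
    & exists y, b' = rcons b y.
Proof.
elim: inp l => [|x inp IH] l //=.
case: ifP => H0.
  by case=> <- <- <-; exists [:: x]; rewrite /= ?H0 ?addn1; last exists false.
case: ifP => H1.
  by case=> <- <- <-; exists [:: x]; rewrite /= ?H0 ?H1 ?addn1; last exists true.
move=> /IH [u [-> -> Hu] Hb]; exists (x :: u) => //.
by split; rewrite /= ?H0 ?H1 // addSnnS.
Qed.

Lemma genopt_round_cat b l inp w b' l' r :
  genopt_round p (b, l, inp) = Some (b', l', r) ->
  genopt_round p (b, l, inp ++ w) = Some (b', l', r ++ w).
Proof.
rewrite /genopt_round.
case: ifP => _; first by case=> <- <- <-.
by case: ifP => _; [case=> <- <- <- | apply: draw_loop_cat].
Qed.

Lemma genopt_round_split b l inp b' l' r :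
  genopt_round p (b, l, inp) = Some (b', l', r) ->
  exists2 u, [/\ inp = u ++ r, l' = (l + size u)%N & genopt_round p (b, l, u) = Some (b', l', [::])]
    & exists y, b' = rcons b y.
Proof.
rewrite /genopt_round.
case: ifP => H0; first by case=> <- <- <-; exists [::]; rewrite ?addn0; last exists false.
case: ifP => H1; first by case=> <- <- <-; exists [::]; rewrite ?addn0; last exists true.
exact: draw_loop_split.
Qed.

Lemma genopt_run_cat k u w b l r :
  genopt_run p k u = Some (b, l, r) -> genopt_run p k (u ++ w) = Some (b, l, r ++ w).
Proof.
elim: k b l r => [|k IH] b l r /=; first by case=> <- <- <-.
case E: (genopt_run p k u) => [[[b0 l0] r0]|] //=.
by rewrite (IH _ _ _ E); apply: genopt_round_cat.
Qed.

Lemma genopt_run_split k u b l r :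
  genopt_run p k u = Some (b, l, r) ->
  exists2 v, [/\ u = v ++ r, l = size v & genopt_run p k v = Some (b, l, [::])] & size b = k.
Proof.
elim: k b l r => [|k IH] b l r /=; first by case=> <- <- <-; exists [::].
case E: (genopt_run p k u) => [[[b0 l0] r0]|] //=.
move=> /genopt_round_split [v2 [Er El Hr] [y Eb]].
have [v1 [Eu Hl Hrun] Hs] := IH _ _ _ E.
exists (v1 ++ v2); last by rewrite Eb size_rcons Hs.
split; first by rewrite Eu Er catA.
  by rewrite El Hl size_cat.
by rewrite (genopt_run_cat v2 Hrun) /= -Hr.
Qed.

End Execution.

Lemma count_andl (T : Type) (b : bool) (P : pred T) s :
  count (fun w => b && P w) s = (b * count P s)%N.
Proof. by case: b; rewrite ?mul1n ?mul0n // count_pred0. Qed.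

Lemma Some_rcons_eq (b : seq bool) (y z : bool) (l1 l2 : nat) (r1 r2 : seq bool) :
  (Some (rcons b y, l1, r1) == Some (rcons b z, l2, r2)) = [&& y == z, l1 == l2 & r1 == r2].
Proof.
by apply/eqP/and3P => [[/rcons_inj [->] -> ->]|[/eqP -> /eqP -> /eqP ->]].
Qed.

(* For a, c the digits of p(b x), p(b (~~ x)): the inner loop of a round started
   with counter l draws k bits without appending in [nstall a c l k] ways, and the
   round appends x after exactly k draws in [nfinish a c l k] ways. *)
Definition nstall (a c : nat -> bool) (l k : nat) : nat :=
  (\prod_(i < k) ((~~ a (l + i).+1 : nat) + (~~ c (l + i).+1 : nat)))%N.

Definition nfinish (a c : nat -> bool) (l k : nat) : nat :=
  if k is k'.+1 then ((a l == c l) * (nstall a c l k' * a (l + k'.+1)))%N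
  else a l && ~~ c l.

Lemma nstallC a c l k : nstall a c l k = nstall c a l k.
Proof. by apply: eq_bigr => i _; rewrite addnC. Qed.

Lemma nstallS a c l k :
  nstall a c l k.+1 = (nstall a c l k * ((~~ a (l + k).+1 : nat) + (~~ c (l + k).+1 : nat)))%N.
Proof. exact: big_ord_recr. Qed.

(* a, c, d are the digits of x, y, x + y and e the carries (digitD0, digitDS). *)
Section CarryPropagation.
Variables a c d e : nat -> bool.
Hypothesis carry0 : (d 0 : nat) = (a 0 + c 0 + e 0)%N.
Hypothesis carryS : forall m, (d m.+1 + 2 * e m)%N = (a m.+1 + c m.+1 + e m.+1)%N.

Lemma sum_nstall_carry m :
  (\sum_(l < m.+1) d l * ((a l == c l) * nstall a c l (m - l)))%N = e m.
Proof.
elim: m => [|m IH].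
  rewrite big_ord1 /nstall big_ord0; move: carry0.
  by case: (a 0); case: (c 0); case: (d 0); case: (e 0).
rewrite big_ord_recr /= subnn /nstall big_ord0 muln1.
have -> : (\sum_(i < m.+1) d i * ((a i == c i) * nstall a c i (m.+1 - i)))%N =
    (e m * ((~~ a m.+1 : nat) + (~~ c m.+1 : nat)))%N.
  rewrite -IH big_distrl; apply: eq_bigr => i _ /=.
  have Hi : (i <= m)%N by rewrite -ltnS.
  by rewrite subSn // nstallS subnKC // !mulnA.
move: (carryS m).
by case: (a m.+1); case: (c m.+1); case: (d m.+1); case: (e m.+1); case: (e m).
Qed.

Lemma sum_nfinish m : (\sum_(l < m.+1) d l * nfinish a c l (m - l))%N = a m.
Proof.
case: m => [|m].
  by rewrite big_ord1 /=; move: carry0; case: (a 0); case: (c 0); case: (d 0); case: (e 0).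
rewrite big_ord_recr subnn /=.
have -> : (\sum_(i < m.+1) d i * nfinish a c i (m.+1 - i))%N = (e m * a m.+1)%N.
  rewrite -sum_nstall_carry big_distrl; apply: eq_bigr => i _ /=.
  have Hi : (i <= m)%N by rewrite -ltnS.
  by rewrite subSn //= addnS subnKC // !mulnA.
move: (carryS m).
by case: (a m.+1); case: (c m.+1); case: (d m.+1); case: (e m.+1); case: (e m).
Qed.

End CarryPropagation.

Section Counting.
Variables (R : realType) (p : seq bool -> R).

Definition nruns (b : bitseq) (j : nat) : nat :=
  count (fun u => genopt_run p (size b) u == Some (b, j, [::])) (bitseqs j).

Definition nrounds (b : bitseq) (x : bool) (l k : nat) : nat :=
  count (fun w => genopt_round p (b, l, w) == Some (rcons b x, (l + k)%N, [::])) (bitseqs k).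

Lemma genopt_run_rcons_split b x j u : size u = j ->
  ((genopt_run p (size b).+1 u == Some (rcons b x, j, [::])) : nat) =
  (\sum_(l < j.+1) ((genopt_run p (size b) (take l u) == Some (b, val l, [::]))
     && (genopt_round p (b, val l, drop l u) == Some (rcons b x, j, [::])) : nat))%N.
Proof.
move=> <-.
pose Q l := (genopt_run p (size b) (take l u) == Some (b, l, [::]))
  && (genopt_round p (b, l, drop l u) == Some (rcons b x, size u, [::])).
have Q_run l : Q l -> genopt_run p (size b) u = Some (b, l, drop l u).
  by case/andP => /eqP /(genopt_run_cat (drop l u)); rewrite cat_take_drop.
case: (boolP (_ == _)) => [|Hnot] /=.
- case E: (genopt_run p (size b) u) => [[[b2 l2] r2]|] //= /eqP.
  move=> /genopt_round_split [v2 [Er El Hr] [y Eb]].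
  have [v1 [Eu Hl Hrun] _] := genopt_run_split E.
  have [Eb2 _] := rcons_inj Eb; subst b2.
  rewrite cats0 in Er; subst r2.
  have Hl2 : (l2 < (size u).+1)%N by rewrite ltnS Eu size_cat Hl leq_addr.
  have HQ : Q l2.
    rewrite /Q; have -> : take l2 u = v1 by rewrite Eu Hl take_size_cat.
    have -> : drop l2 u = v2 by rewrite Eu Hl drop_size_cat.
    by apply/andP; split; apply/eqP.
  rewrite (bigD1 (Ordinal Hl2)) //= -/(Q l2) HQ big1 //.
  move=> i /eqP Hi; rewrite -/(Q i); case: (boolP (Q i)) => // /Q_run.
  by rewrite E => -[Hli _]; case: Hi; apply: val_inj; rewrite /= Hli.
- symmetry; apply: big1 => i _; rewrite -/(Q i); case: (boolP (Q i)) => // HQ.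
  case/andP: (HQ) => _ /eqP Hround; case/eqP: Hnot => /=.
  by rewrite (Q_run _ HQ); exact: Hround.
Qed.

Lemma nruns_rcons b x j :
  nruns (rcons b x) j = (\sum_(l < j.+1) nruns b l * nrounds b x l (j - l))%N.
Proof.
rewrite /nruns size_rcons count_sum big_seq.
under eq_bigr => u.
  rewrite mem_bitseqs => /eqP /(genopt_run_rcons_split b x) ->.
  over.
rewrite -big_seq exchange_big; apply: eq_bigr => l _.
have Hl : (l <= j)%N by rewrite -ltnS.
by rewrite /nrounds subnKC // -count_bitseqs_cat subnKC // count_sum.
Qed.

Lemma count_draw_loop b x l k :
  count (fun w => draw_loop p b l w == Some (rcons b x, (l + k.+1)%N, [::])) (bitseqs k.+1) =
  (nstall (digit (p (rcons b false))) (digit (p (rcons b true))) l k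
   * digit (p (rcons b x)) (l + k.+1))%N.
Proof.
elim: k l => [|k IH] l.
  rewrite /nstall big_ord0 mul1n addn1 /=.
  case: x; case: (digit (p (rcons b false)) l.+1); case: (digit (p (rcons b true)) l.+1);
    by rewrite /= ?Some_rcons_eq ?eqxx.
have overshoot (y : bool) w : w \in bitseqs k.+1 ->
    (Some (rcons b y, l.+1, w) == Some (rcons b x, (l + k.+2)%N, [::])) = false.
  by rewrite mem_bitseqs Some_rcons_eq; case: w => //= z w _; rewrite !andbF.
rewrite [bitseqs _]/= count_cat !count_map.
rewrite (eq_in_count (a2 := fun w => ~~ digit (p (rcons b false)) l.+1 &&
   (draw_loop p b l.+1 w == Some (rcons b x, (l.+1 + k.+1)%N, [::])))); last first.
  by move=> w /overshoot Hw /=; case: digit; rewrite ?Hw // addSnnS.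
rewrite [X in (_ + X)%N](eq_in_count (a2 := fun w => ~~ digit (p (rcons b true)) l.+1 &&
   (draw_loop p b l.+1 w == Some (rcons b x, (l.+1 + k.+1)%N, [::])))); last first.
  by move=> w /overshoot Hw /=; case: digit; rewrite ?Hw // addSnnS.
rewrite !count_andl IH -mulnDl mulnA addSnnS; congr (_ * _)%N.
rewrite /nstall big_ord_recl addn0; congr (_ * _)%N.
by apply: eq_bigr => i _; rewrite /bump /= addnS.
Qed.

Lemma nrounds_nfinish b x l k :
  nrounds b x l k = nfinish (digit (p (rcons b x))) (digit (p (rcons b (~~ x)))) l k.
Proof.
case: k => [|k].
  rewrite /nrounds /= !addn0 /genopt_round.
  by case: x => /=; case: (digit (p (rcons b false)) l); case: (digit (p (rcons b true)) l);
    rewrite /= ?Some_rcons_eq ?eqxx.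
have -> : nrounds b x l k.+1 =
    ((digit (p (rcons b false)) l == digit (p (rcons b true)) l) *
     count (fun w => draw_loop p b l w == Some (rcons b x, (l + k.+1)%N, [::]))
       (bitseqs k.+1))%N.
  rewrite /nrounds -count_andl; apply: eq_in_count => w; rewrite mem_bitseqs /genopt_round.
  case: w => // y w _.
  by case: (digit (p (rcons b false)) l); case: (digit (p (rcons b true)) l);
    rewrite /= ?Some_rcons_eq ?andbF.
by rewrite count_draw_loop; case: x; rewrite //= nstallC eq_sym.
Qed.

End Counting.

Section DyadicFloor.
Variable R : realType.
Implicit Types x y z : R.

Definition floor2 z (m : nat) : nat := `|Num.floor (z * 2 ^+ m)|%N.

(* The carry into digit m of the binary addition x + y (it is 0 or 1, floor2D). *)
Definition carry2 x y (m : nat) : bool := floor2 (x + y) m != (floor2 x m + floor2 y m)%N.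

Lemma floor2P z m : 0 <= z -> (floor2 z m)%:R <= z * 2 ^+ m < (floor2 z m)%:R + 1.
Proof.
move=> z0; have zm0 : 0 <= z * 2 ^+ m by rewrite mulr_ge0 ?exprn_ge0.
rewrite /floor2 natr_absz ger0_norm ?floor_ge0 // floor_le /=.
by rewrite -[1]/((1 : int)%:~R) -intrD floorD1_gt.
Qed.

Lemma digit1 j : digit (1 : R) j = (j == 0%N).
Proof. by rewrite /digit mul1r -natrX pmulrn intrKfloor /= oddX orbF. Qed.

Lemma floor2S z m : 0 <= z -> floor2 z m.+1 = (2 * floor2 z m + digit z m.+1)%N.
Proof.
move=> z0; have /andP [lo hi] := floor2P m z0; have /andP [lo' hi'] := floor2P m.+1 z0.
rewrite exprSr mulrA in lo' hi'.
have H1 : (floor2 z m.+1 < 2 * floor2 z m + 2)%N by rewrite -(ltr_nat R) natrD natrM; lra.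
have H2 : (2 * floor2 z m < floor2 z m.+1 + 1)%N by rewrite -(ltr_nat R) natrD natrM; lra.
rewrite /digit -/(floor2 z m.+1).
have [->|->] : floor2 z m.+1 = (2 * floor2 z m)%N \/ floor2 z m.+1 = (2 * floor2 z m).+1 by lia.
  by rewrite oddM /= addn0.
by rewrite /= oddM /= addn1.
Qed.

Lemma floor2_0 z : 0 <= z <= 1 -> floor2 z 0 = digit z 0.
Proof.
case/andP=> z0 z1; have /andP [lo hi] := floor2P 0 z0; rewrite expr0 mulr1 in lo hi.
have : (floor2 z 0 <= 1)%N by rewrite -(ler_nat R); lra.
by rewrite /digit -/(floor2 z 0); case: (floor2 z 0) => [|[|]].
Qed.

Lemma floor2D x y m : 0 <= x -> 0 <= y ->
  floor2 (x + y) m = (floor2 x m + floor2 y m + carry2 x y m)%N.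
Proof.
move=> x0 y0; have xy0 : 0 <= x + y by rewrite addr_ge0.
have /andP [lx hx] := floor2P m x0; have /andP [ly hy] := floor2P m y0.
have /andP [lxy hxy] := floor2P m xy0; rewrite mulrDl in lxy hxy.
have H1 : (floor2 (x + y) m < floor2 x m + floor2 y m + 2)%N.
  by rewrite -(ltr_nat R) !natrD; lra.
have H2 : (floor2 x m + floor2 y m < floor2 (x + y) m + 1)%N.
  by rewrite -(ltr_nat R) !natrD; lra.
rewrite /carry2; case: eqP => /=; lia.
Qed.

Lemma digitD0 x y : 0 <= x -> 0 <= y -> x + y <= 1 ->
  (digit (x + y) 0 : nat) = (digit x 0 + digit y 0 + carry2 x y 0)%N.
Proof.
move=> x0 y0 xy1; have xy0 : 0 <= x + y by rewrite addr_ge0.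
have le1 t : 0 <= t -> t <= x + y -> 0 <= t <= 1 by move=> t0 /le_trans ->; rewrite ?t0.
rewrite -!floor2_0 ?le1 ?lerDl ?lerDr ?xy0 //; exact: floor2D.
Qed.

Lemma digitDS x y : 0 <= x -> 0 <= y -> forall m,
  (digit (x + y) m.+1 + 2 * carry2 x y m)%N = (digit x m.+1 + digit y m.+1 + carry2 x y m.+1)%N.
Proof.
move=> x0 y0 m; have xy0 : 0 <= x + y by rewrite addr_ge0.
have := floor2S m x0; have := floor2S m y0; have := floor2S m xy0.
have := floor2D m x0 y0; have := floor2D m.+1 x0 y0.
lia.
Qed.

End DyadicFloor.

Lemma nruns_digit (R : realType) (p : seq bool -> R) : binary_coded p ->
  forall b j, nruns p b j = digit (p b) j.
Proof.
case=> p1 p01 padd b; elim/last_ind: b => [|b x IH] j.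
  rewrite /nruns p1 digit1; case: j => [|j] //=.
  by apply/eqP; rewrite -leqn0 leqNgt -has_count; apply/hasP => -[u _ /eqP []].
rewrite nruns_rcons; under eq_bigr do rewrite IH nrounds_nfinish.
have Epb : p b = p (rcons b x) + p (rcons b (~~ x)) by case: x; rewrite padd // addrC.
have [/andP [x0 _] /andP [y0 _]] := (p01 (rcons b x), p01 (rcons b (~~ x))).
have xy1 : p (rcons b x) + p (rcons b (~~ x)) <= 1 by rewrite -Epb; case/andP: (p01 b).
rewrite Epb; exact: (sum_nfinish (digitD0 x0 y0 xy1) (digitDS x0 y0) j).
Qed.

Section BinaryExpansion.
Variable R : realType.
Implicit Types (x : R) (c : nat -> nat).

Definition dsum c (m : nat) : R := \sum_(0 <= j < m) (c j)%:R * 2 ^- j.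

Definition bits x (j : nat) : nat := digit x j.

Lemma exp2N_ge0 j : 0 <= (2 : R) ^- j.
Proof. by rewrite invr_ge0 exprn_ge0. Qed.

Lemma dsumS c m : dsum c m.+1 = dsum c m + (c m)%:R * 2 ^- m.
Proof. exact: big_nat_recr. Qed.

Lemma dsum_scaled_nat c m : exists k : nat, dsum c m.+1 * 2 ^+ m = k%:R.
Proof.
elim: m => [|m [k IH]]; first by exists (c 0%N); rewrite /dsum big_nat1 !expr0 invr1 !mulr1.
exists (2 * k + c m.+1)%N; rewrite dsumS mulrDl exprS mulrCA IH natrD natrM.
by rewrite -mulrA mulVf ?mulr1 // expf_neq0.
Qed.

Lemma dsum_bits x m : 0 <= x <= 1 -> dsum (bits x) m.+1 * 2 ^+ m = (floor2 x m)%:R.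
Proof.
case/andP=> x0 x1; elim: m => [|m IH].
  by rewrite /dsum big_nat1 !expr0 invr1 !mulr1 floor2_0 ?x0.
by rewrite dsumS mulrDl exprS mulrCA IH floor2S // natrD natrM -mulrA mulVf ?mulr1.
Qed.

Lemma dsum_bits_le x m : 0 <= x <= 1 -> dsum (bits x) m <= x.
Proof.
move=> x01; case: m => [|m]; first by rewrite /dsum big_geq // (andP x01).1.
rewrite -(ler_pM2r (exprn_gt0 m (ltr0Sn R 1))) dsum_bits //.
by case/andP: (floor2P m (andP x01).1).
Qed.

Lemma dsum_bits_gt x m : 0 <= x <= 1 -> x < dsum (bits x) m.+1 + 2 ^- m.
Proof.
move=> x01; rewrite -(ltr_pM2r (exprn_gt0 m (ltr0Sn R 1))) mulrDl dsum_bits //.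
by rewrite mulVf ?expf_neq0 //; case/andP: (floor2P m (andP x01).1).
Qed.

(* [dsum c m.+1 * 2 ^+ m] is an integer at most [x * 2 ^+ m], hence at most its floor. *)
Lemma dsum_le_bits x c m : 0 <= x <= 1 -> dsum c m <= x -> dsum c m <= dsum (bits x) m.
Proof.
move=> x01; case: m => [|m]; first by rewrite /dsum !big_geq.
have [k Hk] := dsum_scaled_nat c m; have p2 := exprn_gt0 m (ltr0Sn R 1).
rewrite -(ler_pM2r p2) => Hc; rewrite -(ler_pM2r p2) dsum_bits // Hk ler_nat.
have /andP [_ hi] := floor2P m (andP x01).1.
by rewrite -ltnS -(ltr_nat R) -addn1 natrD -Hk (le_lt_trans Hc hi).
Qed.

Lemma dsum_le_series c x :
  (\sum_(j <oo) ((c j)%:R * 2 ^- j)%:E = x%:E)%E -> forall m, dsum c m <= x.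
Proof.
move=> Hc m; rewrite -lee_fin -Hc /dsum -sumEFin.
by apply: nneseries_lim_ge => j _ _; rewrite lee_fin mulr_ge0 ?exp2N_ge0.
Qed.

Lemma exp2N_lt e : 0 < e -> exists k, (2 : R) ^- k < e.
Proof.
move=> e0; set k := (`|Num.floor e^-1|%N).+1; exists k.
have ei0 : 0 <= e^-1 by rewrite invr_ge0 ltW.
have /andP [_ hk] := floor2P 0 ei0; rewrite /floor2 expr0 mulr1 in hk.
rewrite -[X in _ < X]invrK ltf_pV2 ?posrE ?invr_gt0 ?exprn_gt0 //.
apply: (lt_le_trans hk); rewrite -natrX -[_ + 1](natrD _ _ 1) addn1 ler_nat.
exact/ltnW/ltn_expl.
Qed.

Lemma series_bits x : 0 <= x <= 1 ->
  (\sum_(j <oo) ((bits x j)%:R * 2 ^- j)%:E = x%:E)%E.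
Proof.
move=> x01; have term_ge0 j : (0 <= ((bits x j)%:R * 2 ^- j)%:E)%E.
  by rewrite lee_fin mulr_ge0 ?exp2N_ge0.
apply/eqP; rewrite eq_le; apply/andP; split.
  apply: lime_le; first exact: is_cvg_nneseries.
  by apply: nearW => M; rewrite sumEFin lee_fin dsum_bits_le.
apply/lee_addgt0Pr => e /exp2N_lt [k hk].
apply: (@le_trans _ _ (dsum (bits x) k.+1 + e)%:E).
  by rewrite lee_fin ltW // (lt_le_trans (dsum_bits_gt k x01)) // lerD2l ltW.
rewrite EFinD leeD2r // /dsum -sumEFin.
exact: nneseries_lim_ge.
Qed.

Lemma cost_abel c x M :
  \sum_(0 <= j < M) (c j)%:R * (j%:R * 2 ^- j) + M%:R * (x - dsum c M) =
  \sum_(0 <= m < M) (x - dsum c m.+1).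
Proof.
elim: M => [|M IH]; first by rewrite !big_geq // mul0r addr0.
rewrite big_nat_recr //= [RHS]big_nat_recr //= -IH dsumS -[M.+1]addn1 natrD.
ring.
Qed.

Lemma partial_cost_bits_le x c M : 0 <= x <= 1 -> (forall m, dsum c m <= x) ->
  \sum_(0 <= j < M) (bits x j)%:R * (j%:R * 2 ^- j) <=
  \sum_(0 <= j < M) (c j)%:R * (j%:R * 2 ^- j) + M%:R * (x - dsum c M).
Proof.
move=> x01 cx; have := cost_abel (bits x) x M; have := cost_abel c x M.
have : \sum_(0 <= m < M) (x - dsum (bits x) m.+1) <= \sum_(0 <= m < M) (x - dsum c m.+1).
  by apply: ler_sum => m _; rewrite lerB // dsum_le_bits.
have : 0 <= M%:R * (x - dsum (bits x) M) by rewrite mulr_ge0 // subr_ge0 dsum_bits_le.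
lra.
Qed.

Lemma nneseries_dsum_tail c x M :
  (\sum_(j <oo) ((c j)%:R * 2 ^- j)%:E = x%:E)%E ->
  (\sum_(M <= j <oo) ((c j)%:R * 2 ^- j)%:E = (x - dsum c M)%:E)%E.
Proof.
move=> Hc; have := @nneseries_split R (fun j => ((c j)%:R * 2 ^- j)%:E) 0 M.
rewrite add0n Hc sumEFin.
have term_ge0 j : (0 <= ((c j)%:R * 2 ^- j : R)%:E)%E by rewrite lee_fin mulr_ge0 ?exp2N_ge0.
move=> /(_ (fun j _ => term_ge0 j)); case: (\sum_(M <= j <oo) _)%E => [t| |] //=.
by move=> [] ->; rewrite /dsum addrC addrK.
Qed.

Lemma tail_cost_ge c x M : (\sum_(j <oo) ((c j)%:R * 2 ^- j)%:E = x%:E)%E ->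
  ((M%:R * (x - dsum c M))%:E <= \sum_(M <= j <oo) ((c j)%:R * (j%:R * 2 ^- j))%:E)%E.
Proof.
move=> Hc; rewrite EFinM -(nneseries_dsum_tail M Hc) -nneseriesZl; last first.
  by move=> j _; rewrite lee_fin mulr_ge0 ?exp2N_ge0.
rewrite !(eseries_cond _ xpredT M).
apply: lee_nneseries => [j _ _|j /andP [_ Mj]]; rewrite -EFinM lee_fin.
  by rewrite !mulr_ge0 ?exp2N_ge0.
by rewrite mulrCA ler_wpM2l // ler_wpM2r ?exp2N_ge0 // ler_nat.
Qed.

(* Knuth and Yao: by Abel summation (cost_abel) the cost is controlled by the
   partial sums, where dsum_le_bits applies. *)
Lemma bits_cost_le x c : 0 <= x <= 1 ->
  (\sum_(j <oo) ((c j)%:R * 2 ^- j)%:E = x%:E)%E ->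
  (\sum_(j <oo) ((bits x j)%:R * (j%:R * 2 ^- j) : R)%:E <=
   \sum_(j <oo) ((c j)%:R * (j%:R * 2 ^- j) : R)%:E)%E.
Proof.
move=> x01 Hc; have cost_ge0 (g : nat -> nat) j : (0 <= ((g j)%:R * (j%:R * 2 ^- j) : R)%:E)%E.
  by rewrite lee_fin !mulr_ge0 ?exp2N_ge0.
apply: lime_le; first exact: is_cvg_nneseries.
apply: nearW => M; rewrite sumEFin (nneseries_split 0 M) // add0n sumEFin.
apply: le_trans (leeD2l _ (tail_cost_ge M Hc)).
by rewrite -EFinD lee_fin; apply: partial_cost_bits_le x01 (dsum_le_series Hc).
Qed.

End BinaryExpansion.

Section SumBySize.
Variable R : realType.
Implicit Types (D : set bitseq) (f : nat -> R).

Lemma esum_size_slice D f j : 0 <= f j ->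
  \esum_(u in D `&` [set u | size u = j]) (f (size u))%:E =
  ((count (fun u => `[< D u >]) (bitseqs j))%:R * f j)%:E.
Proof.
move=> fj0; have -> : D `&` [set u | size u = j] =
    [set` [pred u | `[< D u >] && (u \in bitseqs j)]].
  apply/seteqP; split=> u /=; rewrite inE /= mem_bitseqs.
    by case=> Du ->; rewrite eqxx andbT; apply/asboolP.
  by case/andP=> /asboolP Du /eqP.
have fin : finite_set [set` [pred u | `[< D u >] && (u \in bitseqs j)]].
  by apply: sub_finite_set (finite_seq (bitseqs j)) => u; rewrite /= inE => /andP [].
rewrite esum_fset // => [|u]; last by rewrite inE => /andP [_]; rewrite mem_bitseqs => /eqP ->.
rewrite fsumEFin //; congr (_%:E).
rewrite -(@bigfs _ _ _ _ (bitseqs j)) ?bitseqs_uniq //; last by move=> u /andP [_ ->].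
rewrite (eq_bigr (fun _ => f j)) => [|u /andP [_]]; last by rewrite mem_bitseqs => /eqP ->.
rewrite big_const_seq iter_addr_0 mulr_natl; congr (_ *+ _).
by apply: eq_in_count => u /= ->; rewrite andbT.
Qed.

Lemma esum_by_size D f : (forall j, 0 <= f j) ->
  \esum_(u in D) (f (size u))%:E =
  (\sum_(j <oo) ((count (fun u => `[< D u >]) (bitseqs j))%:R * f j)%:E)%E.
Proof.
move=> f0; have DE : D = \bigcup_(j in setT) (D `&` [set u | size u = j]).
  by apply/seteqP; split=> [u Du|u [j _ []]] //; exists (size u).
rewrite [in LHS]DE esum_bigcupT; last 2 first.
- by move=> i k _ _ [u [[_ <-] [_ <-]]].
- by move=> u; rewrite lee_fin.
rewrite nneseries_esumT => [|j]; last by rewrite lee_fin mulr_ge0.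
by apply: eq_esum => j _; rewrite esum_size_slice.
Qed.

Lemma esum_fibers (Y : bitseq -> option bitseq) n f :
  (forall j, 0 <= f j) -> (forall u s, Y u = Some s -> size s = n) ->
  \esum_(u in gdom Y) (f (size u))%:E =
  (\sum_(s <- bitseqs n) \esum_(u in [set u | Y u = Some s]) (f (size u))%:E)%E.
Proof.
move=> f0 Ysize; rewrite esum_by_size //.
under [RHS]eq_bigr do rewrite esum_by_size //.
rewrite -nneseries_sum; last by move=> s j _; rewrite lee_fin mulr_ge0.
apply: eq_eseriesr => j _; rewrite sumEFin; congr (_%:E).
rewrite -big_distrl /= -natr_sum; congr (_%:R * _).
rewrite count_sum; under [RHS]eq_bigr do rewrite count_sum.
rewrite exchange_big /=; apply: eq_bigr => u _.
rewrite /gdom /=; case Yu: (Y u) => [s|].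
  rewrite asboolT // -count_sum (eq_count (a2 := pred1 s)) => [|t].
    by rewrite count_uniq_mem ?bitseqs_uniq // mem_bitseqs (Ysize _ _ Yu) eqxx.
  by apply/asboolP/eqP => [[->]|->].
by rewrite asboolF // big1 // => t _; rewrite asboolF.
Qed.

End SumBySize.

Section GenOptGenerator.
Variables (R : realType) (p : seq bool -> R).

Lemma genopt_genP n u s :
  genopt_gen p n u = Some s <-> genopt_run p n u = Some (s, size u, [::]).
Proof.
rewrite /genopt_gen; split=> [|-> //].
case E: (genopt_run p n u) => [[[b l] [|x r]]|] // [<-].
by have [v [-> -> _] _] := genopt_run_split E; rewrite cats0.
Qed.

Lemma genopt_gen_size n u s : genopt_gen p n u = Some s -> size s = n.
Proof. by move/genopt_genP/genopt_run_split => []. Qed.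

Lemma genopt_gen_prefix_free n : prefix_free (gdom (genopt_gen p n)).
Proof.
move=> u v; rewrite /gdom /= /genopt_gen.
case E: (genopt_run p n u) => [[[b l] [|x r]]|] // _.
by rewrite (genopt_run_cat v E); case: v.
Qed.

Hypothesis p_coded : binary_coded p.

Lemma esum_genopt_fiber (f : nat -> R) n s : (forall j, 0 <= f j) -> size s = n ->
  \esum_(u in [set u | genopt_gen p n u = Some s]) (f (size u))%:E =
  (\sum_(j <oo) ((bits (p s) j)%:R * f j)%:E)%E.
Proof.
move=> f0 <-; rewrite esum_by_size //; apply: eq_eseriesr => j _.
rewrite /bits -nruns_digit //; congr ((_%:R * _)%:E); apply: eq_in_count => u.
rewrite mem_bitseqs => /eqP <- /=.
by apply/asboolP/eqP => /genopt_genP.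
Qed.

Lemma genopt_fiber_mass n s : size s = n ->
  \esum_(u in [set u | genopt_gen p n u = Some s]) weight u = (p s)%:E.
Proof.
move=> Hs; rewrite /weight (esum_genopt_fiber (f := fun j => 2 ^- j)) ?series_bits //.
by case: p_coded.
Qed.

Lemma sum_bitseqs_p n : \sum_(s <- bitseqs n) p s = 1.
Proof.
case: p_coded => p1 _ padd; elim: n => [|n IH]; first by rewrite /= big_seq1.
by rewrite big_bitseqsS -IH; apply: eq_bigr => s _; rewrite -padd.
Qed.

Lemma genopt_gen_mass n : \esum_(u in gdom (genopt_gen p n)) weight (R := R) u = 1%E.
Proof.
rewrite /weight (esum_fibers (f := fun j => (2 : R) ^- j) _ (@genopt_gen_size n));
  last exact: exp2N_ge0.
rewrite big_seq (eq_bigr (fun s => (p s)%:E)) => [|s]; last first.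
  by rewrite mem_bitseqs => /eqP; apply: genopt_fiber_mass.
by rewrite -big_seq sumEFin sum_bitseqs_p.
Qed.

End GenOptGenerator.

Theorem theorem4p6 (R : realType) (p : seq bool -> R) :
  binary_coded p ->
  forall n : nat,
    is_generator n p (genopt_gen p n) /\
    (forall Y, is_generator n p Y ->
       (entropy_cost (R := R) (genopt_gen p n) <= entropy_cost (R := R) Y)%E).
Proof.
move=> p_coded n; split.
  split; [exact: genopt_gen_prefix_free | exact: genopt_gen_mass | exact: genopt_gen_size |].
  exact: genopt_fiber_mass.
move=> Y [_ _ Ysize Ydist].
pose cost j : R := j%:R * 2 ^- j.
have cost_ge0 j : 0 <= cost j by rewrite mulr_ge0 ?exp2N_ge0.
rewrite /entropy_cost (esum_fibers (f := cost) _ (@genopt_gen_size _ p n)) //.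
rewrite (esum_fibers (f := cost) _ Ysize) // !big_seq; apply: lee_sum => s.
rewrite mem_bitseqs => /eqP sn.
rewrite esum_genopt_fiber // esum_by_size //; apply: bits_cost_le; first by case: p_coded.
by rewrite -esum_by_size => [|j]; [exact: Ydist | exact: exp2N_ge0].
Qed.
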